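(* Let $\mathfrak g=\mathfrak k\oplus\mathfrak m$ be a Pauli-spanned Cartan decomposition and let $b_1,\dots,b_d\in\tilde{\mathfrak m}$ be pairwise commuting Pauli strings (spanning an Abelian subalgebra $\mathfrak b\subseteq\mathfrak m$) all lying in the same connected component of the frustration graph of $\mathfrak g$. If for some $2\le r\le d$ both $\tilde{\mathfrak k}^{r-1}_{1\dots r-2}$ and $\tilde{\mathfrak k}^r_{1\dots r-1}$ are non-empty, then $|\tilde{\mathfrak k}^{r-1}_{1\dots r-2}|>|\tilde{\mathfrak k}^r_{1\dots r-1}|$.
   Context: Pauli strings on $n$ qubits are tensor products of $I,X,Y,Z$, not all identity; two Pauli strings either commute or anticommute. A Pauli-spanned Cartan decomposition is $\mathfrak g=\mathfrak k\oplus\mathfrak m\subseteq\mathfrak{su}(2^n)$ with $\mathfrak k=\mathrm{span}_{i\mathbb R}\tilde{\mathfrak k}$, $\mathfrak m=\mathrm{span}_{i\mathbb R}\tilde{\mathfrak m}$, $\mathfrak g=\mathrm{span}_{i\mathbb R}\tilde{\mathfrak g}$ with $\tilde{\mathfrak g}=\tilde{\mathfrak k}\sqcup\tilde{\mathfrak m}$ the set of all Pauli strings (up to phase) $\sigma$ with $i\sigma\in\mathfrak g$, and $[\mathfrak k,\mathfrak k]\subseteq\mathfrak k$, $[\mathfrak m,\mathfrak m]\subseteq\mathfrak k$, $[\mathfrak k,\mathfrak m]\subseteq\mathfrak m$. The frustration graph of $\mathfrak g$ has vertex set $\tilde{\mathfrak g}$, with edges between anticommuting pairs. For disjoint index lists,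 $\tilde{\mathfrak k}^{i_1i_2\dots}_{j_1j_2\dots}$ is the set of $k\in\tilde{\mathfrak k}$ anticommuting with every $b_{i_p}$ and commuting with every $b_{j_q}$ (no condition on other indices). *)

From mathcomp Require Import all_boot.
Set Implicit Arguments. Unset Strict Implicit. Unset Printing Implicit Defensive.

(* A Pauli string on n qubits, up to phase: at each qubit a pair (x,z) of bits,
   (false,false)=I, (true,false)=X, (true,true)=Y, (false,true)=Z. *)
Definition pauli (n : nat) := {ffun 'I_n -> bool * bool}.

(* the all-identity string (not a Pauli string in the paper's sense) *)
Definition pid (n : nat) : pauli n := [ffun => (false, false)].

Definition anticomm (n : nat) (s t : pauli n) : bool :=
  odd #|[set i : 'I_n | ((s i).1 && (t i).2) (+) ((s i).2 && (t i).1)]|.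

Definition pmul (n : nat) (s t : pauli n) : pauli n :=
  [ffun i => ((s i).1 (+) (t i).1, (s i).2 (+) (t i).2)].

(* Pauli-spanned Cartan decomposition g = k (+) m, given by the sets of Pauli
   strings ktil, mtil spanning k and m.  For Pauli strings s,t one has
   [is, it] = 0 if they commute and [is,it] = +-2 i (s t) otherwise, with s t a
   Pauli string up to phase; since Pauli strings form a basis, the bracket
   inclusions [k,k] <= k, [m,m] <= k, [k,m] <= m are exactly the closure
   conditions below. *)
Definition pauli_cartan (n : nat) (ktil mtil : {set pauli n}) : Prop :=
  [/\ pid n \notin ktil, pid n \notin mtil & [disjoint ktil & mtil]] /\
  [/\ {in ktil &, forall a b, anticomm a b -> pmul a b \in ktil},
      {in mtil &, forall a b, anticomm a b -> pmul a b \in ktil} &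
      {in ktil & mtil, forall a b, anticomm a b -> pmul a b \in mtil}].

Definition frust (n : nat) (gtil : {set pauli n}) : rel (pauli n) :=
  fun a b => [&& a \in gtil, b \in gtil & anticomm a b].

(* ktil^{A}_{C}: elements of ktil anticommuting with every b_i (i in A)
   and commuting with every b_j (j in C) *)
Definition ksub (n d : nat) (ktil : {set pauli n}) (b : 'I_d -> pauli n)
    (A C : {set 'I_d}) : {set pauli n} :=
  [set k in ktil | [forall i in A, anticomm k (b i)] &&
                   [forall j in C, ~~ anticomm k (b j)]].

From mathcomp Require Import all_boot zify.
Set Implicit Arguments. Unset Strict Implicit. Unset Printing Implicit Defensive.

(* Pauli strings up to phase form the symplectic space F_2^(2n): [pmul] is the
   addition and [anticomm] the symplectic form, and a Pauli-spanned Lie algebra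
   is a set closed under products of anticommuting strings.  In such a set the
   frustration graph has components of diameter at most two.  Writing a = b_(r-1)
   and c = b_r, a common neighbour of a and c, combined with elements of the two
   non-empty sets, yields k_s in ktil anticommuting with a and c and commuting
   with b_1, ..., b_(r-2).  Then k |-> k k_s if k anticommutes with k_s, and
   k |-> k c k_s a otherwise, injects ktil^r_(1..r-1) into
   ktil^(r-1)_(1..r-2) minus k_s. *)

Lemma odd_card_addb (T : finType) (P Q : pred T) :
  odd #|[set i | P i (+) Q i]| = odd #|[set i | P i]| (+) odd #|[set i | Q i]|.
Proof.
have card_sum (R : pred T) : #|[set i | R i]| = \sum_i R i.
  by rewrite -sum1_card big_mkcond; apply: eq_bigr => i _; rewrite inE; case: (R i).
suff E : #|[set i | P i (+) Q i]| + (#|[set i | P i && Q i]|).*2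
         = #|[set i | P i]| + #|[set i | Q i]|.
  by rewrite -oddD -E oddD odd_double addbF.
rewrite -addnn !card_sum -!big_split; apply: eq_bigr => i _.
by case: (P i); case: (Q i).
Qed.

Section PauliAlgebra.
Variable n : nat.
Implicit Types s t u : pauli n.

Lemma anticommC s t : anticomm s t = anticomm t s.
Proof.
congr odd; apply: eq_card => i; rewrite !inE.
by case: (s i) => [[] []]; case: (t i) => [[] []].
Qed.

Lemma anticommxx s : anticomm s s = false.
Proof.
rewrite /anticomm (_ : [set i | _] = set0) ?cards0 //.
by apply/setP => i; rewrite !inE; case: (s i) => [[] []].
Qed.

Lemma anticommMl s t u : anticomm (pmul s t) u = anticomm s u (+) anticomm t u.
Proof.
rewrite /anticomm -odd_card_addb; congr odd; apply: eq_card => i.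
rewrite !inE !ffunE /=.
by case: (s i) => [[] []]; case: (t i) => [[] []]; case: (u i) => [[] []].
Qed.

Lemma anticommMr s t u : anticomm u (pmul s t) = anticomm u s (+) anticomm u t.
Proof. by rewrite anticommC anticommMl !(anticommC u). Qed.

Lemma pmulC s t : pmul s t = pmul t s.
Proof. by apply/ffunP => i; rewrite !ffunE addbC [X in (_, X)]addbC. Qed.

Lemma pmulK t : cancel (fun s => pmul s t) (fun s => pmul s t).
Proof.
by move=> s; apply/ffunP => i; rewrite !ffunE /= -!addbA !addbb !addbF; case: (s i).
Qed.

Lemma pmulI t : injective (fun s => pmul s t).
Proof. exact: can_inj (pmulK t). Qed.

End PauliAlgebra.

Definition anticomm_closed (n : nat) (g : {set pauli n}) : Prop :=
  {in g &, forall s t, anticomm s t -> pmul s t \in g}.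

Section ClosedSet.
Variables (n : nat) (g : {set pauli n}).
Hypothesis g_closed : anticomm_closed g.

Lemma frust_connect_diam2 u v : connect (frust g) u v ->
  [\/ v = u, anticomm u v | exists2 w, w \in g & anticomm w u && anticomm w v].
Proof.
case/connectP=> p; elim/last_ind: p v => [|p y IH] v /=.
  by move=> _ ->; constructor 1.
rewrite rcons_path last_rcons => /andP[/IH/(_ erefl){}IH /and3P[xg yg xy]] ->{v}.
set x := last u p in IH xg xy *.
case uy: (anticomm u y); [by constructor 2 | constructor 3].
case: IH => [xu | ux | [w wg /andP[wu wx]]].
- by rewrite -xu xy in uy.
- by exists x; rewrite // anticommC ux.
case wy: (anticomm w y); first by exists w; rewrite // wu.
case ux: (anticomm u x); first by exists x; rewrite // anticommC ux.
by exists (pmul w x); [apply: g_closed | rewrite !anticommMl wu wy xy anticommC ux].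
Qed.

Lemma closed_witness_adjust u v w : u \in g -> w \in g ->
    anticomm w u -> anticomm v u ->
  exists2 w', w' \in g &
    anticomm w' v /\ forall t, ~~ anticomm u t -> anticomm w' t = anticomm w t.
Proof.
move=> ug wg wu; rewrite anticommC => uv; case wv: (anticomm w v); first by exists w.
exists (pmul w u); first exact: g_closed.
by split=> [|t /negbTE ut]; rewrite anticommMl ?wv ?uv ?ut ?addbF.
Qed.

Lemma pmul3_closed w y1 y2 y3 : w \in g -> [&& y1 \in g, y2 \in g & y3 \in g] ->
    [&& anticomm w y1, anticomm w y2 & anticomm w y3] ->
    ~~ [|| anticomm y1 y2, anticomm y1 y3 | anticomm y2 y3] ->
  pmul (pmul y1 y2) y3 \in g.
Proof.
move=> wg /and3P[y1g y2g y3g] /and3P[wy1 wy2 wy3].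
rewrite !negb_or => /and3P[/negbTE y12 /negbTE y13 /negbTE y23].
(* y1 w, y2 y1 w and y3 y2 y1 w lie in g in turn, and w anticommutes with the last *)
have g1 : pmul y1 w \in g by apply: g_closed; rewrite // anticommC.
have g2 : pmul y2 (pmul y1 w) \in g.
  by apply: g_closed; rewrite // anticommMr anticommC y12 anticommC wy2.
have g3 : pmul y3 (pmul y2 (pmul y1 w)) \in g.
  by apply: g_closed; rewrite // !anticommMr !(anticommC y3) y13 y23 wy3.
have g4 := g_closed wg g3; rewrite !anticommMr wy1 wy2 wy3 anticommxx in g4.
suff -> : pmul (pmul y1 y2) y3 = pmul w (pmul y3 (pmul y2 (pmul y1 w))) by exact: g4.
apply/ffunP => i; rewrite !ffunE /=.
by case: (w i) => [[] []]; case: (y1 i) => [[] []]; case: (y2 i) => [[] []];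
  case: (y3 i) => [[] []].
Qed.

End ClosedSet.

Lemma cartan_closed n (ktil mtil : {set pauli n}) :
    anticomm_closed ktil ->
    {in mtil &, forall s t, anticomm s t -> pmul s t \in ktil} ->
    {in ktil & mtil, forall s t, anticomm s t -> pmul s t \in mtil} ->
  anticomm_closed (ktil :|: mtil).
Proof.
move=> kk mm km s t /setUP[sk|sm] /setUP[tk|tm] st; apply/setUP.
- by left; apply: kk.
- by right; apply: km.
- by right; rewrite pmulC; apply: km; rewrite // anticommC.
- by left; apply: mm.
Qed.

Lemma ksubP n d (ktil : {set pauli n}) (b : 'I_d -> pauli n) (A C : {set 'I_d}) k :
  reflect [/\ k \in ktil, {in A, forall i, anticomm k (b i)}
            & {in C, forall j, anticomm k (b j) = false}]
          (k \in ksub ktil b A C).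
Proof.
rewrite inE; apply: (iffP and3P) => [[kk /forall_inP kA /forall_inP kC] |[kk kA kC]].
  by split=> // j /kC /negbTE.
by split=> //; apply/forall_inP => // j /kC ->.
Qed.

Section CartanCount.
Variables (n d : nat) (ktil mtil : {set pauli n}) (b : 'I_d -> pauli n).
Hypothesis k_closed : anticomm_closed ktil.
Hypothesis mm_k : {in mtil &, forall s t, anticomm s t -> pmul s t \in ktil}.
Hypothesis km_m : {in ktil & mtil, forall s t, anticomm s t -> pmul s t \in mtil}.
Hypothesis b_m : forall i, b i \in mtil.
Hypothesis b_comm : forall i j, ~~ anticomm (b i) (b j).

Let bC i j : anticomm (b i) (b j) = false := negbTE (b_comm i j).

Variables (i1 i2 : 'I_d) (C : {set 'I_d}).
Local Notation a := (b i1).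
Local Notation c := (b i2).
Local Notation K1 := (ksub ktil b [set i1] C).
Local Notation K2 := (ksub ktil b [set i2] (i1 |: C)).
Local Notation Ks := (ksub ktil b [set i1; i2] C).

Lemma exists_anticomm_pair : K1 != set0 -> K2 != set0 ->
    connect (frust (ktil :|: mtil)) a c ->
  exists2 x, x \in ktil :|: mtil &
    [/\ anticomm x a, anticomm x c & {in C, forall j, anticomm x (b j) = false}].
Proof.
have g_closed := cartan_closed k_closed mm_k km_m.
have gk s : s \in ktil -> s \in ktil :|: mtil by move=> sk; rewrite inE sk.
have gb j : b j \in ktil :|: mtil by rewrite inE b_m orbT.
case/set0Pn => k1 /ksubP[k1k /(_ i1 (set11 _)) k1a k1C].
case/set0Pn => k2 /ksubP[k2k /(_ i2 (set11 _)) k2c k2C] ac.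
have k2a := k2C i1 (setU11 _ _).
have {}k2C j : j \in C -> anticomm k2 (b j) = false by move=> jC; apply/k2C/setU1r.
case k1c: (anticomm k1 c); first by exists k1; rewrite ?gk.
case k12: (anticomm k1 k2).
  exists (pmul k1 k2); first by rewrite gk ?k_closed.
  by split=> [||j jC]; rewrite anticommMl ?k1a ?k2a ?k1c ?k2c ?k1C ?k2C.
case: (frust_connect_diam2 g_closed ac) => [ca | | [w wg /andP[wa wc]]].
- by rewrite -ca k2c in k2a.
- by rewrite bC.
have [wC | ] := boolP [forall j in C, ~~ anticomm w (b j)].
  by exists w => //; split=> // j jC; apply/negbTE/(forall_inP wC).
(* Otherwise w anticommutes with some b_j, j in C; adjusting w by a and c gives a
   common neighbour of the commuting k1, k2, b_j, which puts k1 k2 b_j in g. *)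
rewrite negb_forall_in => /exists_inP[j jC /negbNE wj].
have [w1 w1g [w1k1 w1a]] := closed_witness_adjust g_closed (gb i1) wg wa k1a.
have w1c : anticomm w1 c by rewrite w1a ?b_comm.
have [w2 w2g [w2k2 w2c]] := closed_witness_adjust g_closed (gb i2) w1g w1c k2c.
have w2k1 : anticomm w2 k1 by rewrite w2c ?w1k1 // anticommC k1c.
have w2j : anticomm w2 (b j) by rewrite w2c ?w1a ?b_comm.
exists (pmul (pmul k1 k2) (b j)).
  apply: (pmul3_closed g_closed w2g);
  by rewrite ?gb ?gk ?w2k1 ?w2k2 ?w2j ?k12 ?k1C ?k2C.
by split=> [||j' jC']; rewrite !anticommMl ?k1a ?k2a ?k1c ?k2c ?k1C ?k2C ?bC.
Qed.

Lemma ksub_pair_nonempty : K1 != set0 -> K2 != set0 ->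
  connect (frust (ktil :|: mtil)) a c -> Ks != set0.
Proof.
move=> K1n K2n ac; have [x xg [xa xc xC]] := exists_anticomm_pair K1n K2n ac.
apply/set0Pn; case/setUP: xg => [xk | xm].
  by exists x; apply/ksubP; split=> // i /set2P[]->.
exists (pmul x a); apply/ksubP; split; first exact: mm_k xm (b_m _) xa.
  by move=> i /set2P[]->; rewrite anticommMl ?anticommxx ?bC addbF.
by move=> j jC; rewrite anticommMl xC ?bC.
Qed.

Lemma card_ksub_lt ks : ks \in Ks -> #|K2| < #|K1|.
Proof.
case/ksubP=> ksk ksac ksC.
have ksa := ksac i1 (set21 _ _); have ksc := ksac i2 (set22 _ _).
have ksK1 : ks \in K1 by apply/ksubP; split=> // i /set1P->.
pose f k := if anticomm k ks then pmul k ks else pmul (pmul (pmul k c) ks) a.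
have f_ks k : anticomm (f k) ks = anticomm k ks.
  rewrite /f; case: ifP => kks; rewrite !anticommMl anticommxx ?kks //.
  by rewrite anticommC ksc anticommC ksa.
have fK k : k \in K2 -> f k \in K1 :\ ks.
  case/ksubP=> kk /(_ i2 (set11 _)) kc kC.
  have ka := kC i1 (setU11 _ _).
  have {}kC j : j \in C -> anticomm k (b j) = false by move=> jC; apply/kC/setU1r.
  have fc : anticomm (f k) c = false.
    by rewrite /f; case: ifP => _; rewrite !anticommMl kc ksc ?anticommxx ?bC.
  rewrite in_setD1; apply/andP; split; first by apply: contraFneq fc => ->.
  apply/ksubP; rewrite /f; case: ifP => kks; split=> [|i /set1P->|j jC];
    rewrite ?anticommMl ?ka ?ksa ?kC ?ksC ?bC ?anticommxx //.
  - exact: k_closed.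
  apply: mm_k; rewrite ?b_m // ?anticommMl ?ka ?ksa ?bC //.
  by rewrite pmulC; apply: km_m; rewrite ?km_m ?b_m // anticommMr anticommC kks ksc.
have f_inj : {in K2 &, injective f}.
  move=> k k' _ _ ff'; have e : anticomm k ks = anticomm k' ks by rewrite -f_ks ff' f_ks.
  by move: ff'; rewrite /f e; case: ifP => _; [move/pmulI | move/pmulI/pmulI/pmulI].
rewrite (cardsD1 ks K1) ksK1 add1n ltnS -(card_in_imset f_inj).
by apply/subset_leq_card/subsetP => _ /imsetP[k kK2 ->]; apply: fK.
Qed.

End CartanCount.

Theorem lemmaC3 (n d : nat) (ktil mtil : {set pauli n})
    (b : 'I_d -> pauli n) (r : nat) :
  pauli_cartan ktil mtil ->
  (forall i, b i \in mtil) ->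
  (forall i j, ~~ anticomm (b i) (b j)) ->
  (forall i j, connect (frust (ktil :|: mtil)) (b i) (b j)) ->
  2 <= r <= d ->
  let K1 := ksub ktil b [set i : 'I_d | i.+1 == r - 1]
                        [set i : 'I_d | i.+1 <= r - 2] in
  let K2 := ksub ktil b [set i : 'I_d | i.+1 == r]
                        [set i : 'I_d | i.+1 <= r - 1] in
  K1 != set0 -> K2 != set0 ->
  #|K2| < #|K1|.
Proof.
move=> [_ [kk mm km]] bm bcomm bconn /andP[r2 rd].
have lt1 : r - 2 < d by lia.
have lt2 : r - 1 < d by lia.
pose i1 := Ordinal lt1; pose i2 := Ordinal lt2.
have E1 : [set i : 'I_d | i.+1 == r - 1] = [set i1].
  by apply/setP => i; rewrite !inE -val_eqE /=; apply/eqP/eqP; lia.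
have E2 : [set i : 'I_d | i.+1 == r] = [set i2].
  by apply/setP => i; rewrite !inE -val_eqE /=; apply/eqP/eqP; lia.
have EC : [set i : 'I_d | i.+1 <= r - 1] = i1 |: [set i : 'I_d | i.+1 <= r - 2].
  apply/setP => i; rewrite !inE -val_eqE /= (_ : r - 1 = (r - 2).+1) ?ltnS; last by lia.
  by rewrite leq_eqVlt.
rewrite E1 E2 EC /= => K1n K2n.
have /set0Pn[ks ksK] := ksub_pair_nonempty kk mm km bm bcomm K1n K2n (bconn i1 i2).
exact: (card_ksub_lt kk mm km bm bcomm ksK).
Qed.
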